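(* Let $E\subseteq\mathbb{R}$ and let $f:E\to\mathbb{R}$ be a bounded function which is Abel continuous on $E$. Then $f$ is Cesàro continuous on $E$.
   Context: A sequence $(p_n)_{n\ge0}$ is Abel convergent to $\ell$ if $\sum_{k=0}^{\infty}p_k x^k$ converges for every $0\le x<1$ and $\lim_{x\to 1^-}(1-x)\sum_{k=0}^{\infty}p_k x^k=\ell$. $f$ is Abel continuous on $E$ if for every sequence $(p_n)$ in $E$ Abel convergent to some $\ell\in E$, $(f(p_n))$ is Abel convergent to $f(\ell)$. A sequence $(p_n)_{n\ge0}$ is Cesàro convergent to $\ell$ if $\lim_{n\to\infty}\frac{1}{n+1}\sum_{k=0}^{n}p_k=\ell$. $f$ is Cesàro continuous on $E$ if for every sequence $(p_n)$ in $E$ Cesàro convergent to some $\ell\in E$, $(f(p_n))$ is Cesàro convergent to $f(\ell)$. *)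

From Stdlib Require Import Reals.
From Coquelicot Require Import Coquelicot.
Open Scope R_scope.

Definition abel_convergent (p : nat -> R) (l : R) : Prop :=
  (forall x : R, 0 <= x < 1 -> ex_series (fun k => p k * x ^ k)) /\
  filterlim (fun x => (1 - x) * Series (fun k => p k * x ^ k))
    (at_left 1) (locally l).

Definition cesaro_convergent (p : nat -> R) (l : R) : Prop :=
  is_lim_seq (fun n => sum_f_R0 p n / INR (S n)) l.

Definition abel_continuous_on (E : R -> Prop) (f : R -> R) : Prop :=
  forall (p : nat -> R) (l : R), (forall n, E (p n)) -> E l ->
    abel_convergent p l -> abel_convergent (fun n => f (p n)) (f l).

Definition cesaro_continuous_on (E : R -> Prop) (f : R -> R) : Prop :=
  forall (p : nat -> R) (l : R), (forall n, E (p n)) -> E l ->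
    cesaro_convergent p l -> cesaro_convergent (fun n => f (p n)) (f l).

Definition bounded_on (E : R -> Prop) (f : R -> R) : Prop :=
  exists M : R, forall x, E x -> Rabs (f x) <= M.

From Stdlib Require Import Reals Lra Lia Classical.
From Coquelicot Require Import Coquelicot.
Open Scope R_scope.

(* An Abel continuous function is affine on E.  For x <= y < z in E put s = (y - x) / (z - x).  The 0/1-valued
   Sturmian sequence e_n = floor((n+1) s) - floor(n s) is Abel convergent to s,
   because its power series telescopes.  Hence p_n = x + (z - x) e_n takes its
   values in {x, z} and is Abel convergent to y, while f(p_n) = f x + (f z - f x) e_n
   is Abel convergent to f x + (f z - f x) s; Abel continuity and uniqueness of
   limits give f y = f x + (f z - f x) s.  Affine maps commute with Cesaro
   means, so f is Cesaro continuous. *)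

Lemma Series_geom x : 0 <= x < 1 -> Series (fun k => x ^ k) = / (1 - x).
Proof.
  intros Hx. apply is_series_unique, is_series_geom. rewrite Rabs_pos_eq; lra.
Qed.

Lemma ex_series_bounded_pow (u : nat -> R) M x :
  (forall n, Rabs (u n) <= M) -> 0 <= x < 1 -> ex_series (fun k => u k * x ^ k).
Proof.
  intros HM Hx.
  apply (@ex_series_le R_AbsRing R_CompleteNormedModule _ (fun k => M * x ^ k)).
  - intros n. change (Rabs (u n * x ^ n) <= M * x ^ n).
    rewrite Rabs_mult, (Rabs_pos_eq (x ^ n)) by (apply pow_le; lra).
    apply Rmult_le_compat_r; [apply pow_le; lra | apply HM].
  - exists (M * / (1 - x)). apply (is_series_scal_l M (fun k => x ^ k)).
    apply is_series_geom. rewrite Rabs_pos_eq; lra.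
Qed.

Lemma Rabs_Series_bounded_pow (u : nat -> R) M x :
  (forall n, Rabs (u n) <= M) -> 0 <= x < 1 ->
  Rabs (Series (fun k => u k * x ^ k)) <= M / (1 - x).
Proof.
  intros HM Hx.
  assert (Hpow : forall n, 0 <= x ^ n) by (intros; apply pow_le; lra).
  assert (Habs : ex_series (fun k => Rabs (u k * x ^ k))).
  { apply (ex_series_ext (fun k => Rabs (u k) * x ^ k)).
    - intros n. rewrite Rabs_mult, (Rabs_pos_eq (x ^ n)); auto.
    - apply (ex_series_bounded_pow _ M); [|exact Hx].
      intros n. rewrite Rabs_Rabsolu. apply HM. }
  eapply Rle_trans; [apply Series_Rabs, Habs|].
  unfold Rdiv. rewrite <- Series_geom, <- Series_scal_l by exact Hx.
  apply Series_le.
  - intros n. split; [apply Rabs_pos|].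
    rewrite Rabs_mult, (Rabs_pos_eq (x ^ n)) by auto.
    apply Rmult_le_compat_r; auto.
  - apply (ex_series_bounded_pow (fun _ => M) (Rabs M)); [intros; apply Rle_refl | exact Hx].
Qed.

Lemma filterlim_at_left_1_linear_bound (g : R -> R) l C :
  (forall x, 0 <= x < 1 -> Rabs (g x - l) <= C * (1 - x)) ->
  filterlim g (at_left 1) (locally l).
Proof.
  intros Hg. apply filterlim_locally. intros eps.
  assert (HC : 0 < Rabs C + 1) by (pose proof (Rabs_pos C); lra).
  assert (Hd : 0 < Rmin 1 (eps / (Rabs C + 1))).
  { apply Rmin_pos; [lra|]. apply Rdiv_lt_0_compat; [apply cond_pos | exact HC]. }
  exists (mkposreal _ Hd). intros y Hy Hy1.
  change (Rabs (y - 1) < Rmin 1 (eps / (Rabs C + 1))) in Hy.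
  change (Rabs (g y - l) < eps).
  rewrite Rabs_left in Hy by lra.
  pose proof (Rmin_l 1 (eps / (Rabs C + 1))) as Hd1.
  pose proof (Rmin_r 1 (eps / (Rabs C + 1))) as Hd2.
  assert (Hclose : (Rabs C + 1) * (1 - y) < eps).
  { apply (Rmult_lt_reg_r (/ (Rabs C + 1))); [apply Rinv_0_lt_compat, HC|].
    replace ((Rabs C + 1) * (1 - y) * / (Rabs C + 1)) with (1 - y) by (field; lra).
    lra. }
  pose proof (Hg y ltac:(lra)). pose proof (Rle_abs C). nra.
Qed.

Lemma abel_convergent_ext u v l :
  (forall n, u n = v n) -> abel_convergent u l -> abel_convergent v l.
Proof.
  intros Huv [Hex Hlim]. split.
  - intros x Hx. apply (ex_series_ext (fun k => u k * x ^ k)); [|exact (Hex x Hx)].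
    intros n. rewrite Huv. reflexivity.
  - apply (filterlim_ext (fun x => (1 - x) * Series (fun k => u k * x ^ k))); [|exact Hlim].
    intros x. f_equal. apply Series_ext. intros n. rewrite Huv. reflexivity.
Qed.

Lemma abel_convergent_affine u l a b :
  abel_convergent u l -> abel_convergent (fun n => a + b * u n) (a + b * l).
Proof.
  intros [Hex Hlim].
  assert (Hsum : forall x, 0 <= x < 1 ->
    ex_series (fun k => a * x ^ k) /\ ex_series (fun k => b * (u k * x ^ k))).
  { intros x Hx. split.
    - apply (ex_series_bounded_pow (fun _ => a) (Rabs a)); [intros; lra | exact Hx].
    - apply (@ex_series_scal_l R_AbsRing R_NormedModule), Hex, Hx. }
  split.
  - intros x Hx. destruct (Hsum x Hx) as [Ha Hb].
    apply (ex_series_ext (fun k => a * x ^ k + b * (u k * x ^ k))); [intros; simpl; ring|].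
    apply (@ex_series_plus R_AbsRing R_NormedModule); assumption.
  - apply (filterlim_ext_loc (fun x => a + b * ((1 - x) * Series (fun k => u k * x ^ k)))).
    + exists (mkposreal 1 Rlt_0_1). intros x Hx Hx1.
      change (Rabs (x - 1) < 1) in Hx. rewrite Rabs_left in Hx by lra.
      destruct (Hsum x ltac:(lra)) as [Ha Hb].
      rewrite (Series_ext (fun k => (a + b * u k) * x ^ k) (fun k => a * x ^ k + b * (u k * x ^ k))) by (intros; ring).
      rewrite Series_plus, !Series_scal_l, Series_geom by (assumption || lra).
      field. lra.
    + apply (filterlim_comp _ _ _ _ (fun t => a + b * t) _ (locally l) _ Hlim).
      apply (continuity_pt_filterlim (fun t => a + b * t)). reg.
Qed.

Lemma abel_convergent_telescoping (q : nat -> R) M :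
  (forall n, Rabs (q n) <= M) -> q 0%nat = 0 ->
  abel_convergent (fun n => q n - q (S n)) 0.
Proof.
  intros HM Hq0.
  assert (HqS : forall n, Rabs (q (S n)) <= M) by (intros; apply HM).
  split.
  - intros x Hx. apply (ex_series_bounded_pow _ (M + M)); [|exact Hx].
    intros n. unfold Rminus. eapply Rle_trans; [apply Rabs_triang|].
    rewrite Rabs_Ropp. apply Rplus_le_compat; apply HM.
  - apply (filterlim_at_left_1_linear_bound _ _ M). intros x Hx.
    pose proof (ex_series_bounded_pow q M x HM Hx) as Hq.
    pose proof (ex_series_bounded_pow _ M x HqS Hx) as HqSx.
    set (Q := Series (fun k => q (S k) * x ^ k)).
    assert (Hshift : Series (fun k => q k * x ^ k) = x * Q).
    { rewrite Series_incr_1 by exact Hq. rewrite Hq0, Rmult_0_l, Rplus_0_l.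
      unfold Q. rewrite <- Series_scal_l. apply Series_ext. intros n. simpl. ring. }
    rewrite (Series_ext _ (fun k => q k * x ^ k - q (S k) * x ^ k)) by (intros; ring).
    rewrite Series_minus, Hshift by assumption. fold Q.
    replace ((1 - x) * (x * Q - Q) - 0) with (- ((1 - x) * ((1 - x) * Q))) by ring.
    rewrite Rabs_Ropp, !Rabs_mult, Rabs_pos_eq by lra.
    pose proof (Rabs_Series_bounded_pow (fun n => q (S n)) M x HqS Hx) as HQ.
    cbv beta in HQ. fold Q in HQ.
    assert (HQ' : (1 - x) * Rabs Q <= M).
    { apply (Rmult_le_compat_l (1 - x)) in HQ; [|lra].
      replace ((1 - x) * (M / (1 - x))) with M in HQ by (field; lra).
      exact HQ. }
    nra.
Qed.

(* [sturmian s n] is floor((n+1) s) - floor(n s), written through fractional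
   parts so that its power series telescopes. *)
Definition sturmian (s : R) (n : nat) : R :=
  s + frac_part (INR n * s) - frac_part (INR (S n) * s).

Lemma sturmian_0_or_1 s n :
  0 <= s < 1 -> sturmian s n = 0 \/ sturmian s n = 1.
Proof.
  intros Hs. unfold sturmian, frac_part. rewrite S_INR.
  replace ((INR n + 1) * s) with (INR n * s + s) by ring.
  set (a := INR n * s).
  destruct (base_Int_part a) as [A1 A2].
  destruct (base_Int_part (a + s)) as [B1 B2].
  set (A := Int_part a) in *. set (B := Int_part (a + s)) in *.
  assert (Hlt : (B - A < 2)%Z) by (apply lt_IZR; rewrite minus_IZR; simpl; lra).
  assert (Hgt : (-1 < B - A)%Z) by (apply lt_IZR; rewrite minus_IZR; simpl; lra).
  assert (Hk : (B - A = 0 \/ B - A = 1)%Z) by lia.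
  destruct Hk as [H|H]; [left|right]; apply (f_equal IZR) in H;
    rewrite minus_IZR in H; simpl in H; lra.
Qed.

Lemma abel_convergent_sturmian s : 0 <= s < 1 -> abel_convergent (sturmian s) s.
Proof.
  intros Hs.
  assert (Hfrac : forall n, Rabs (frac_part (INR n * s)) <= 1).
  { intros n. destruct (base_fp (INR n * s)). rewrite Rabs_pos_eq; lra. }
  assert (Hfrac0 : frac_part (INR 0 * s) = 0) by (simpl; rewrite Rmult_0_l; apply fp_R0).
  pose proof (abel_convergent_affine _ _ s 1
    (abel_convergent_telescoping (fun n => frac_part (INR n * s)) 1 Hfrac Hfrac0)) as H.
  rewrite Rmult_0_r, Rplus_0_r in H.
  revert H. apply abel_convergent_ext. intros n. unfold sturmian. ring.
Qed.

Definition collinear (f : R -> R) (x y z : R) : Prop :=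
  (f y - f x) * (z - x) = (f z - f x) * (y - x).

Lemma abel_continuous_collinear_sorted E f x y z :
  abel_continuous_on E f -> E x -> E y -> E z -> x <= y <= z ->
  collinear f x y z.
Proof.
  intros Habel Ex Ey Ez Hxyz. unfold collinear.
  destruct (Req_dec y z) as [<-|Hyz]; [reflexivity|].
  set (s := (y - x) / (z - x)).
  assert (Hs : 0 <= s < 1).
  { unfold s. split.
    - apply Rmult_le_pos; [lra|]. left. apply Rinv_0_lt_compat. lra.
    - apply (Rmult_lt_reg_r (z - x)); [lra|]. field_simplify; lra. }
  set (p := fun n => x + (z - x) * sturmian s n).
  assert (Hp : forall n, p n = x \/ p n = z).
  { intros n. unfold p. destruct (sturmian_0_or_1 s n Hs) as [H|H]; rewrite H;
      [left|right]; ring. }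
  assert (Hpy : abel_convergent p y).
  { replace y with (x + (z - x) * s) by (unfold s; field; lra).
    apply abel_convergent_affine, abel_convergent_sturmian, Hs. }
  assert (Hfp : abel_convergent (fun n => f (p n)) (f x + (f z - f x) * s)).
  { apply (abel_convergent_ext (fun n => f x + (f z - f x) * sturmian s n)).
    - intros n. unfold p. destruct (sturmian_0_or_1 s n Hs) as [H|H]; rewrite H.
      + replace (x + (z - x) * 0) with x by ring. ring.
      + replace (x + (z - x) * 1) with z by ring. ring.
    - apply abel_convergent_affine, abel_convergent_sturmian, Hs. }
  assert (HEp : forall n, E (p n)) by (intros n; destruct (Hp n) as [->| ->]; assumption).
  destruct (Habel p y HEp Ey Hpy) as [_ Hfy]. destruct Hfp as [_ Hfs].
  rewrite (filterlim_locally_unique _ _ _ Hfy Hfs). unfold s. field. lra.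
Qed.

Lemma abel_continuous_collinear E f x y z :
  abel_continuous_on E f -> E x -> E y -> E z -> collinear f x y z.
Proof.
  intros Habel Ex Ey Ez.
  pose proof (fun a b c Ea Eb Ec Hab Hbc =>
    abel_continuous_collinear_sorted E f a b c Habel Ea Eb Ec (conj Hab Hbc)) as Hsorted.
  unfold collinear in *.
  destruct (Rle_or_lt x y), (Rle_or_lt y z), (Rle_or_lt x z);
  first
  [ pose proof (Hsorted x y z Ex Ey Ez ltac:(lra) ltac:(lra))
  | pose proof (Hsorted x z y Ex Ez Ey ltac:(lra) ltac:(lra))
  | pose proof (Hsorted y x z Ey Ex Ez ltac:(lra) ltac:(lra))
  | pose proof (Hsorted y z x Ey Ez Ex ltac:(lra) ltac:(lra))
  | pose proof (Hsorted z x y Ez Ex Ey ltac:(lra) ltac:(lra))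
  | pose proof (Hsorted z y x Ez Ey Ex ltac:(lra) ltac:(lra)) ];
  lra.
Qed.

Lemma abel_continuous_on_affine E f l :
  abel_continuous_on E f -> E l -> exists a, forall w, E w -> f w = f l + a * (w - l).
Proof.
  intros Habel El.
  destruct (classic (exists u, E u /\ u <> l)) as [[u [Eu Hul]] | Hsingleton].
  - exists ((f u - f l) / (u - l)). intros w Ew.
    pose proof (abel_continuous_collinear E f l u w Habel El Eu Ew) as H.
    unfold collinear in H.
    transitivity (f l + (f w - f l) * (u - l) / (u - l)); [field; lra|].
    rewrite <- H. field. lra.
  - exists 0. intros w Ew.
    destruct (Req_dec w l) as [->|Hwl]; [ring|].
    exfalso. apply Hsingleton. exists w. split; assumption.
Qed.

Lemma cesaro_convergent_ext u v l :
  (forall n, u n = v n) -> cesaro_convergent u l -> cesaro_convergent v l.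
Proof.
  intros Huv. apply is_lim_seq_ext. intros n. f_equal. apply sum_eq. auto.
Qed.

Lemma cesaro_convergent_affine u l a b :
  cesaro_convergent u l -> cesaro_convergent (fun n => a + b * u n) (a + b * l).
Proof.
  unfold cesaro_convergent. intros Hu.
  apply (is_lim_seq_ext (fun n => a + b * (sum_f_R0 u n / INR (S n)))).
  - intros n. rewrite sum_plus, sum_cte.
    rewrite (sum_eq (fun k => b * u k) (fun k => u k * b)) by (intros; ring).
    rewrite <- scal_sum. field. apply not_0_INR. discriminate.
  - apply is_lim_seq_plus'; [apply is_lim_seq_const|].
    apply (is_lim_seq_scal_l _ b l Hu).
Qed.

Theorem theorem6 (E : R -> Prop) (f : R -> R) :
  bounded_on E f -> abel_continuous_on E f -> cesaro_continuous_on E f.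
Proof.
  intros _ Habel p l Hp El Hcesaro.
  destruct (abel_continuous_on_affine E f l Habel El) as [a Ha].
  pose proof (cesaro_convergent_affine p l (f l - a * l) a Hcesaro) as Haffine.
  replace (f l - a * l + a * l) with (f l) in Haffine by ring.
  revert Haffine. apply cesaro_convergent_ext.
  intros n. rewrite (Ha (p n) (Hp n)). ring.
Qed.
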